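(* Let $\mu$ be a joint distribution of a triple $(X,A,Y)$ with $X\in\mathcal{X}\subseteq\mathbb{R}^d$, $A\in\{0,1\}$ with $\Pr(A=0),\Pr(A=1)>0$, and $Y\in[-1,1]$. Let $\rho\ge0$ and let $h:\mathcal{X}\to\mathbb{R}$ satisfy $|h(x)-h(x')|\le\rho\|x-x'\|$ for all $x,x'\in\mathcal{X}$ ($\rho$-individual fairness), and let $\widehat{Y}=h(X)$. Then $$|\varepsilon_{1,\mu_0}(\widehat{Y})-\varepsilon_{1,\mu_1}(\widehat{Y})|\le\sqrt{\rho^2+1}\cdot W_1(\mu_0,\mu_1).$$
   Context: $\|\cdot\|$ is the Euclidean norm. For $a\in\{0,1\}$, $\mu_a$ is the conditional distribution of $(X,Y)$ given $A=a$, viewed as a distribution on $\mathbb{R}^{d+1}$. $\varepsilon_{1,\nu}(\widehat{Y}):=\mathbb{E}_\nu[|\widehat{Y}-Y|]$. $W_1(\mu_0,\mu_1)=\inf_\gamma\int\|(x,y)-(x',y')\|\,d\gamma$ over couplings $\gamma$ of $\mu_0,\mu_1$, with Euclidean norm on $\mathbb{R}^{d+1}$. *)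

From HB Require Import structures.
From mathcomp Require Import all_boot all_order all_algebra.
From mathcomp Require Import all_classical all_reals all_analysis.
Set Implicit Arguments. Unset Strict Implicit. Unset Printing Implicit Defensive.
Import Order.TTheory GRing.Theory Num.Theory.
Import numFieldNormedType.Exports.
Local Open Scope classical_set_scope.
Local Open Scope ring_scope.

Definition Rvec (R : realType) (n : nat) :=
  g_sigma_algebraType (@open 'rV[R]_n).

Definition eucl_dist (R : realType) (n : nat) (x x' : 'rV[R]_n) : R :=
  Num.sqrt (\sum_(i < n) (x 0 i - x' 0 i) ^+ 2).

Definition eucl_dist1 (R : realType) (d : nat)
    (p q : (Rvec R d * R)%type) : R :=
  Num.sqrt (\sum_(i < d) (p.1 0 i - q.1 0 i) ^+ 2 + (p.2 - q.2) ^+ 2).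

(* The joint law of (X, A, Y) lives on (R^d * bool) * R; z = ((x, a), y).
   A = 0 is encoded by false, A = 1 by true. *)
Definition jointT (R : realType) (d : nat) := ((Rvec R d * bool) * R)%type.

Definition evA (R : realType) (d : nat) (a : bool) : set (jointT R d) :=
  [set z | z.1.2 = a].

Definition pXY (R : realType) (d : nat) (z : jointT R d) : (Rvec R d * R)%type :=
  (z.1.1, z.2).

Definition cond_law (R : realType) (d : nat) (mu : probability (jointT R d) R)
    (a : bool) (B : set (Rvec R d * R)%type) : \bar R :=
  (mu (@evA R d a `&` (@pXY R d) @^-1` B) * ((fine (mu (@evA R d a)))^-1)%:E)%E.

Definition coupling (R : realType) (d : nat) (mu : probability (jointT R d) R)
    (g : probability ((Rvec R d * R) * (Rvec R d * R))%type R) : Prop :=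
  forall B : set (Rvec R d * R)%type, measurable B ->
    g (B `*` setT) = cond_law mu false B /\ g (setT `*` B) = cond_law mu true B.

Definition W1 (R : realType) (d : nat) (mu : probability (jointT R d) R) : \bar R :=
  ereal_inf [set (\int[g]_p (eucl_dist1 p.1 p.2)%:E)%E | g in coupling mu].

(* eps_{1, mu_a}(h(X)) = E_{mu_a}[ |h(X) - Y| ] = E[|h(X) - Y| 1{A=a}] / P(A = a);
   the integral is taken over the (full-measure, measurable) event {X \in Xs}. *)
Definition eps1 (R : realType) (d : nat) (mu : probability (jointT R d) R)
    (Xs : set 'rV[R]_d) (h : 'rV[R]_d -> R) (a : bool) : \bar R :=
  ((\int[mu]_(z in @evA R d a `&` [set z | Xs z.1.1]) (`|h z.1.1 - z.2|)%:E)
     * ((fine (mu (@evA R d a)))^-1)%:E)%E.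

From HB Require Import structures.
From mathcomp Require Import all_boot all_order all_algebra.
From mathcomp Require Import all_classical all_reals all_analysis.
From mathcomp Require Import measurable_realfun.
From mathcomp Require Import ring lra.
Set Implicit Arguments. Unset Strict Implicit. Unset Printing Implicit Defensive.
Import Order.TTheory GRing.Theory Num.Theory.
Import numFieldNormedType.Exports.
Local Open Scope classical_set_scope.
Local Open Scope ring_scope.

(* For any coupling g of mu_0 and mu_1, eps_{1,mu_a} is the g-expectation of
   the loss l(x, y) = |h x - y| evaluated at the a-th marginal.  By
   Cauchy-Schwarz, rho |x - x'| + |y - y'| <= sqrt(rho^2 + 1) |(x,y) - (x',y')|,
   so l is sqrt(rho^2 + 1)-Lipschitz on Xs x R, whence
   |eps_0 - eps_1| <= sqrt(rho^2 + 1) E_g |p - q|; take the infimum over g. *)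

Lemma continuous_measurable_Rvec (R : realType) n (D : set 'rV[R]_n)
    (f : 'rV[R]_n -> R) :
  measurable (D : set (Rvec R n)) -> {within D, continuous f} ->
  measurable_fun (D : set (Rvec R n)) (f : Rvec R n -> R).
Proof.
move=> mD /continuousP cf.
apply: (measurability _ (RGenOpens.measurableE R)) => _ [_ [a [b ->] <-]].
have /open_subspaceP[V oV VD] :=
  cf _ (@interval_open R (BRight a) (BLeft b) isT isT).
by rewrite setIC -VD; apply: measurableI => //; exact: sub_sigma_algebra.
Qed.

Lemma eucl_dist_le_coord (R : realType) n (x y : 'rV[R]_n) (r : R) :
  0 <= r -> (forall i, `|x 0 i - y 0 i| <= r) -> eucl_dist x y <= n.+1%:R * r.
Proof.
move=> r0 xyr; rewrite /eucl_dist -[leRHS]ger0_norm ?mulr_ge0// -sqrtr_sqr.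
rewrite ler_sqrt ?sqr_ge0//.
apply: (@le_trans _ _ (\sum_(i < n) r ^+ 2)).
  apply: ler_sum => i _; rewrite -real_normK ?num_real//.
  by rewrite lerXn2r ?nnegrE.
rewrite sumr_const card_ord exprMn -[_ *+ n]mulr_natl ler_wpM2r ?sqr_ge0//.
by rewrite -natrX ler_nat expnS (leq_trans (leqnSn n)) ?leq_pmulr.
Qed.

Lemma lipschitz_within_continuous (R : realType) n (D : set 'rV[R]_n)
    (f : 'rV[R]_n -> R) (k : R) : 0 <= k ->
  (forall x x', D x -> D x' -> `|f x - f x'| <= k * eucl_dist x x') ->
  {within D, continuous f}.
Proof.
move=> k0 fk; apply/subspace_continuousP => x Dx.
apply/cvgrPdist_lt => e e0.
have k1 : 0 < k + 1 by rewrite ltr_wpDl.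
pose r := e / (k + 1) / n.+1%:R.
have r0 : 0 < r by rewrite !divr_gt0.
rewrite near_withinE; near=> y => Dy; rewrite /from_subspace.
have xyr i : `|x 0 i - y 0 i| <= r.
  have : ball x r y by near: y; exact: nbhsx_ballx.
  by move=> [_ /(_ 0 i)] /ltW.
apply: le_lt_trans (fk _ _ Dx Dy) _.
apply: (@le_lt_trans _ _ (k * (e / (k + 1)))).
  rewrite ler_wpM2l// (le_trans (eucl_dist_le_coord (ltW r0) xyr))//.
  by rewrite /r mulrC divfK// pnatr_eq0.
by rewrite mulrA ltr_pdivrMr// mulrC ltr_pM2l// ltrDl.
Unshelve. all: by end_near.
Qed.

Lemma measurable_eucl_dist1 (R : realType) d :
  measurable_fun setT
    (fun p : ((Rvec R d * R) * (Rvec R d * R))%type => eucl_dist1 p.1 p.2).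
Proof.
have mcoord (i : 'I_d) : measurable_fun setT (fun x : Rvec R d => x 0 i).
  apply: continuous_measurable_Rvec => //.
  exact/continuous_subspaceT/coord_continuous.
apply: measurableT_comp.
  by apply: continuous_measurable_fun; exact: sqrt_continuous.
apply: measurable_funD.
  apply: measurable_sum => i; apply/measurable_funX/measurable_funB.
    exact: measurableT_comp (mcoord i)
      (measurableT_comp measurable_fst measurable_fst).
  exact: measurableT_comp (mcoord i)
    (measurableT_comp measurable_fst measurable_snd).
apply/measurable_funX/measurable_funB.
  exact: measurableT_comp measurable_snd measurable_fst.
exact: measurableT_comp measurable_snd measurable_snd.
Qed.

Lemma cauchy_schwarz2 (R : realType) (k e u : R) :
  0 <= k -> 0 <= e -> 0 <= u ->
  k * e + u <= Num.sqrt (k ^+ 2 + 1) * Num.sqrt (e ^+ 2 + u ^+ 2).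
Proof.
move=> k0 e0 u0; rewrite -sqrtrM ?addr_ge0 ?sqr_ge0//.
rewrite -[leLHS]ger0_norm ?addr_ge0 ?mulr_ge0// -sqrtr_sqr ler_sqrt;
  last by rewrite mulr_ge0 ?addr_ge0 ?sqr_ge0.
have := sqr_ge0 (k * u - e); nra.
Qed.

Section integrals.
Local Open Scope ereal_scope.

Lemma ge0_integral_transfer d1 d2 d3 (X1 : measurableType d1)
    (X2 : measurableType d2) (Y : measurableType d3) (R : realType)
    (m1 : {measure set X1 -> \bar R}) (m2 : {measure set X2 -> \bar R})
    (phi1 : X1 -> Y) (phi2 : X2 -> Y) (G : Y -> \bar R) :
  measurable_fun setT phi1 -> measurable_fun setT phi2 ->
  (forall B, measurable B -> m1 (phi1 @^-1` B) = m2 (phi2 @^-1` B)) ->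
  measurable_fun setT G -> (forall y, 0 <= G y) ->
  \int[m1]_x G (phi1 x) = \int[m2]_x G (phi2 x).
Proof.
move=> mphi1 mphi2 m12 mG G0.
have := ge0_integral_pushforward mphi1 m1 measurableT mG (fun y _ => G0 y).
have := ge0_integral_pushforward mphi2 m2 measurableT mG (fun y _ => G0 y).
rewrite !preimage_setT => <- <-.
by apply: eq_measure_integral => B mB _; exact: m12.
Qed.

Lemma ge0_integral_mrestr d (T : measurableType d) (R : realType)
    (m : {measure set T -> \bar R}) (D : set T) (mD : measurable D)
    (f : T -> \bar R) :
  measurable_fun setT f -> (forall x, 0 <= f x) ->
  \int[mrestr m mD]_x f x = \int[m]_(x in D) f x.
Proof.
move=> mf f0.
have mrestrC : mrestr m mD (~` D) = 0 by rewrite /mrestr setICl measure0.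
rewrite (ge0_negligible_integral _ _ _ _ mrestrC) ?setTD ?setCK//; last first.
  exact: measurableC.
by apply: eq_measure_integral => A mA AD; rewrite /= /mrestr setIidl.
Qed.

Lemma le_abse_integralB d (T : measurableType d) (R : realType)
    (m : {measure set T -> \bar R}) (f1 f2 g : T -> R) (k : R) :
  (0 <= k)%R ->
  m.-integrable setT (EFin \o f1) -> m.-integrable setT (EFin \o f2) ->
  measurable_fun setT g -> (forall x, 0 <= g x)%R ->
  {ae m, forall x, (`|f1 x - f2 x| <= k * g x)%R} ->
  `|\int[m]_x (f1 x)%:E - \int[m]_x (f2 x)%:E| <= k%:E * \int[m]_x (g x)%:E.
Proof.
move=> k0 if1 if2 mg g0 f12g.
have mf12 : measurable_fun setT (EFin \o (f1 \- f2)%R).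
  apply/measurable_EFinP/measurable_funB; apply/measurable_EFinP.
  - exact: measurable_int if1.
  - exact: measurable_int if2.
rewrite -integralB_EFin// (le_trans (le_abse_integral _ _ mf12))//.
rewrite -ge0_integralZl_EFin//; last 2 first.
  - by move=> x _; rewrite lee_fin.
  - exact/measurable_EFinP.
apply: ae_ge0_le_integral => //.
- exact: measurableT_comp.
- by move=> x _; rewrite lee_fin mulr_ge0.
- exact/measurable_EFinP/measurable_funM.
by apply: filterS f12g => x f12gx _; rewrite /= lee_fin.
Qed.

End integrals.

Section individually_fair.
Variables (R : realType) (d : nat) (mu : probability (jointT R d) R).
Variables (Xs : set 'rV[R]_d) (h : 'rV[R]_d -> R) (rho : R).
Hypothesis mXs : measurable (Xs : set (Rvec R d)).
Hypothesis aeXs : {ae mu, forall z : jointT R d, Xs z.1.1}.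
Hypothesis rho_ge0 : 0 <= rho.
Hypothesis h_lipschitz :
  forall x x', Xs x -> Xs x' -> `|h x - h x'| <= rho * eucl_dist x x'.

Lemma measurable_evA a : measurable (@evA R d a).
Proof.
have mA : measurable_fun setT (fun z : jointT R d => z.1.2).
  exact: measurableT_comp measurable_snd measurable_fst.
by have := mA measurableT [set a]; rewrite setTI; exact.
Qed.

Lemma measurable_pXY : measurable_fun setT (@pXY R d).
Proof.
apply: measurable_fun_pair => //.
exact: measurableT_comp measurable_fst measurable_fst.
Qed.

(* Cut off outside Xs x R, where h is unconstrained and possibly not even
   measurable; eps1 only integrates over {X \in Xs}. *)
Definition loss : Rvec R d * R -> R :=
  (fun p => `|h p.1 - p.2|) \_ ((Xs : set (Rvec R d)) `*` setT).

Lemma loss_ge0 p : 0 <= loss p.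
Proof. by rewrite /loss patchE; case: ifPn. Qed.

Lemma measurable_loss : measurable_fun setT loss.
Proof.
apply/(measurable_restrictT _ _).1; first exact: measurableX.
apply: measurableT_comp => //; apply: measurable_funB; last first.
  exact: measurable_funTS measurable_snd.
apply: (@measurable_comp _ _ _ _ _ _ (Xs : set (Rvec R d))) => //.
- by move=> _ [[x y] [Xx _] <-].
- apply: continuous_measurable_Rvec => //.
  exact: lipschitz_within_continuous rho_ge0 h_lipschitz.
- exact: measurable_funTS measurable_fst.
Qed.

Lemma lipschitz_loss p q : Xs p.1 -> Xs q.1 ->
  `|loss p - loss q| <= Num.sqrt (rho ^+ 2 + 1) * eucl_dist1 p q.
Proof.
case: p q => [x y] [x' y'] /= Xx Xx'.
rewrite /loss !patchE !ifT ?inE//=.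
apply: le_trans (ler_dist_dist _ _) _.
have -> : h x - y - (h x' - y') = (h x - h x') - (y - y') by ring.
apply: le_trans (ler_normB _ _) _.
apply: (@le_trans _ _ (rho * eucl_dist x x' + `|y - y'|)).
  by rewrite lerD2r h_lipschitz.
apply: le_trans (cauchy_schwarz2 rho_ge0 (sqrtr_ge0 _) (normr_ge0 (y - y'))) _.
rewrite /eucl_dist1 /= sqr_sqrtr ?sumr_ge0// => [|i _]; last exact: sqr_ge0.
by rewrite real_normK ?num_real.
Qed.

Local Open Scope ereal_scope.

Let inv_mass_ge0 a : (0 <= (fine (mu (evA a)))^-1)%R.
Proof. by rewrite invr_ge0 fine_ge0. Qed.

Definition cond_measure a : {measure set jointT R d -> \bar R} :=
  mscale (NngNum (inv_mass_ge0 a)) (mrestr mu (measurable_evA a)).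

Lemma cond_lawE a B : cond_law mu a B = cond_measure a (@pXY R d @^-1` B).
Proof. by rewrite /cond_law /= /mscale /mrestr setIC muleC. Qed.

Lemma eps1E a : eps1 mu Xs h a = \int[cond_measure a]_z (loss (pXY z))%:E.
Proof.
have mlossXY : measurable_fun setT (fun z => (loss (@pXY R d z))%:E).
  apply/measurable_EFinP.
  exact: measurableT_comp measurable_loss measurable_pXY.
rewrite ge0_integral_mscale//; last by move=> z _; rewrite lee_fin loss_ge0.
rewrite ge0_integral_mrestr//; last by move=> z; rewrite lee_fin loss_ge0.
rewrite /eps1 integral_mkcondr muleC; congr (_ * _).
apply: eq_integral => z _; rewrite /loss !patchE /pXY /=.
have [Xz|nXz] := pselect (Xs z.1.1); first by rewrite !ifT ?inE.
by rewrite !ifF//; apply: memNset => // -[].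
Qed.

Definition marginal (g : probability ((Rvec R d * R) * (Rvec R d * R))%type R)
    (phi : (Rvec R d * R) * (Rvec R d * R) -> Rvec R d * R) a :=
  forall B, measurable B -> g (phi @^-1` B) = cond_law mu a B.

Lemma coupling_marginals g :
  coupling mu g -> marginal g fst false /\ marginal g snd true.
Proof.
move=> cg; split => B mB.
- rewrite (_ : fst @^-1` B = B `*` setT); first exact: (cg B mB).1.
  by apply/seteqP; split=> -[? ?] //= [].
- rewrite (_ : snd @^-1` B = setT `*` B); first exact: (cg B mB).2.
  by apply/seteqP; split=> -[? ?] //= [].
Qed.

Section marginal.
Variables (g : probability ((Rvec R d * R) * (Rvec R d * R))%type R).
Variables (phi : (Rvec R d * R) * (Rvec R d * R) -> Rvec R d * R) (a : bool).
Hypotheses (mphi : measurable_fun setT phi) (g_phi : marginal g phi a).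

Lemma marginal_loss_integral : \int[g]_p (loss (phi p))%:E = eps1 mu Xs h a.
Proof.
rewrite eps1E; apply: (ge0_integral_transfer (G := fun y => (loss y)%:E)) => //.
- exact: measurable_pXY.
- by move=> B mB; rewrite -cond_lawE; exact: g_phi.
- by apply/measurable_EFinP; exact: measurable_loss.
- by move=> p; rewrite lee_fin loss_ge0.
Qed.

Lemma marginal_loss_integrable :
  eps1 mu Xs h a < +oo -> g.-integrable setT (EFin \o (loss \o phi)).
Proof.
move=> eps_fin; apply/integrableP; split.
  by apply/measurable_EFinP; exact: measurableT_comp measurable_loss mphi.
under eq_integral do rewrite /= ger0_norm ?loss_ge0//.
by rewrite marginal_loss_integral.
Qed.

Lemma marginal_ae_Xs : {ae g, forall p, Xs (phi p).1}.
Proof.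
have mnotXs : measurable (~` (Xs : set (Rvec R d)) `*` @setT R).
  by apply: measurableX => //; exact: measurableC.
exists (phi @^-1` (~` (Xs : set (Rvec R d)) `*` setT)); split => //.
- by rewrite -[X in measurable X]setTI; exact: mphi.
- rewrite g_phi// cond_lawE /= /mscale /mrestr.
  have [N [mN muN XsN]] := aeXs.
  rewrite [X in _ * X](@subset_measure0 _ _ _ mu _ N) ?mule0//; last first.
    by move=> z [[/XsN]].
  apply: measurableI (measurable_evA a).
  by rewrite -[X in measurable X]setTI; exact: measurable_pXY.
Qed.

End marginal.

Lemma coupling_bound g : coupling mu g ->
  eps1 mu Xs h false < +oo -> eps1 mu Xs h true < +oo ->
  `|eps1 mu Xs h false - eps1 mu Xs h true|
    <= (Num.sqrt (rho ^+ 2 + 1))%:E * \int[g]_p (eucl_dist1 p.1 p.2)%:E.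
Proof.
case/coupling_marginals => g_fst g_snd eps0_fin eps1_fin.
rewrite -(marginal_loss_integral measurable_fst g_fst).
rewrite -(marginal_loss_integral measurable_snd g_snd).
apply: le_abse_integralB.
- exact: sqrtr_ge0.
- exact: marginal_loss_integrable g_fst eps0_fin.
- exact: marginal_loss_integrable g_snd eps1_fin.
- exact: measurable_eucl_dist1.
- by move=> p; exact: sqrtr_ge0.
apply: filterS2 (marginal_ae_Xs measurable_fst g_fst)
  (marginal_ae_Xs measurable_snd g_snd) => p.
exact: lipschitz_loss.
Qed.

End individually_fair.

Theorem proposition3 (R : realType) (d : nat)
    (mu : probability (jointT R d) R)
    (Xs : set 'rV[R]_d) (h : 'rV[R]_d -> R) (rho : R) :
  measurable (Xs : set (Rvec R d)) ->
  {ae mu, forall z : jointT R d, Xs z.1.1} ->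
  (0 < mu (@evA R d false))%E -> (0 < mu (@evA R d true))%E ->
  {ae mu, forall z : jointT R d, -1 <= z.2 <= 1} ->
  0 <= rho ->
  (forall x x', Xs x -> Xs x' -> `|h x - h x'| <= rho * eucl_dist x x') ->
  (eps1 mu Xs h false < +oo)%E -> (eps1 mu Xs h true < +oo)%E ->
  (`|eps1 mu Xs h false - eps1 mu Xs h true|
     <= (Num.sqrt (rho ^+ 2 + 1))%:E * W1 mu)%E.
Proof.
move=> mXs aeXs _ _ _ rho_ge0 h_lipschitz eps0_fin eps1_fin.
rewrite /W1 -ereal_inf_pZl ?sqrtr_gt0 ?ltr_wpDl ?sqr_ge0//.
apply: le_ereal_inf_tmp => _ [_ [g cg <-] <-].
exact: coupling_bound.
Qed.
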